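(* Let $\boldsymbol{\psi}=(\psi_k)_{k\in\mathbb{K}}$ be a regularization of $\psi:\mathcal{M}\to\Theta$ which is continuous at the data-generating distribution $P\in\mathcal{M}$ with respect to a distance $d$, with family of moduli of continuity $(\delta_k)_{k\in\mathbb{K}}$, and suppose there exists a real-valued positive diverging sequence $(r_n)_{n\in\mathbb{N}}$ such that $d(P_n,P)=o_P(r_n^{-1})$. Let $\bar B$, $\bar\delta$, $\mathcal{G}_n$ and $\tilde k_n$ be as in the context. Then $$\|\psi_{\tilde k_n}(P_n)-\psi(P)\|_\Theta=O_P\left(\inf_{k\in\mathcal{G}_n}\{\bar\delta_k(r_n^{-1})+\bar B_k(P)\}\right).$$
   Context: Setting: $\mathbb{Z}\subseteq\mathbb{R}^d$; data $Z_1,Z_2,\dots$ IID with law $P$; $\mathbf{P}$ the product probability on $\mathbb{Z}^\infty$ (to which $o_P,O_P$ refer); $ca(\mathbb{Z})$ the signed Borel measures of finite variation; $\mathcal{D}$ the discretely supported probability measures; $P_n=n^{-1}\sum_{i\le n}\delta_{Z_i}$. $\mathcal{M}$ is a set of Borel probability measures on $\mathbb{Z}$, $(\Theta,\|\cdot\|_\Theta)$ a normed space, $\mathbb{K}\subseteq\mathbb{R}_+$ unbounded above. A regularization is a family $(\psi_k)_{k\in\mathbb{K}}$, $\psi_k:\mathbb{D}_\psi\subseteq ca(\mathbb{Z})\to\Theta$, $\mathbb{D}_\psi\supseteq\mathcal{M}\cup\mathcal{D}$, with $\|\psi_k(Q)-\psi(Q)\|_\Theta\to0$ as $k\to\infty$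 for all $Q\in\mathcal{M}$. A modulus of continuity is a continuous non-decreasing $f:\mathbb{R}_+\to\mathbb{R}_+$ with $f(t)=0$ iff $t=0$; continuity at $P$ w.r.t. $d$ means moduli $(\delta_k)$ with $\|\psi_k(P')-\psi_k(P)\|_\Theta\le\delta_k(d(P',P))$ for all $k$ and $P'\in\mathbb{D}_\psi$. Objects: $k\mapsto\bar B_k(P)$ is a non-increasing function $\mathbb{R}_+\to\mathbb{R}_+$ with $\bar B_k(P)\ge\|\psi_k(P)-\psi(P)\|_\Theta$ for all $k\ge0$ and $\lim_{k\to\infty}\bar B_k(P)=0$; for each $n$, $k\mapsto\bar\delta_k(r_n^{-1})$ is a non-decreasing function $\mathbb{R}_+\to\mathbb{R}_+$ with $\bar\delta_k(r_n^{-1})\ge\delta_k(r_n^{-1})$. For each $n$, $\mathcal{G}_n$ is a (user-specified) finite subset of $\mathbb{K}$. Define $$\mathcal{L}_n=\{k\in\mathcal{G}_n:\ \|\psi_k(P_n)-\psi_{k'}(P_n)\|_\Theta\le4\bar\delta_{k'}(r_n^{-1})\ \text{for all }k'\ge k,\ k'\in\mathcal{G}_n\},$$ and $\tilde k_n=\min\{k:k\in\mathcal{L}_n\}$. *)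

From HB Require Import structures.
From mathcomp Require Import all_boot all_order all_algebra.
From mathcomp Require Import all_classical all_reals all_analysis.

Set Implicit Arguments.
Unset Strict Implicit.
Unset Printing Implicit Defensive.

Import Order.TTheory GRing.Theory Num.Theory.
Import numFieldNormedType.Exports.

Local Open Scope classical_set_scope.
Local Open Scope ring_scope.

Definition borel_Rd (R : realType) (d : nat) : set (set 'rV[R]_d) :=
  <<s [set O : set 'rV[R]_d | open O] >>.

(* The measurable space T "is" a subset Z = iota(T) of R^d equipped with the
   trace of the Borel sigma-algebra. *)
Definition borel_subset_of_Rd (R : realType) (d : nat) (dT : measure_display)
    (T : measurableType dT) (iota : T -> 'rV[R]_d) : Prop :=
  injective iota /\
  forall A : set T, measurable A <-> exists B, borel_Rd B /\ A = iota @^-1` B.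

Definition same_measure dT (T : measurableType dT) (R : realType)
  (mu nu : charge T R) : Prop := forall A, measurable A -> mu A = nu A.

Definition is_prob_charge dT (T : measurableType dT) (R : realType)
  (mu : charge T R) : Prop :=
  (forall A, measurable A -> (0 <= mu A)%E) /\ mu setT = 1%E.

Definition is_discrete_prob dT (T : measurableType dT) (R : realType)
  (mu : charge T R) : Prop :=
  exists (x : nat -> T) (w : nat -> R),
    (forall i, 0 <= w i) /\
    (\sum_(0 <= i <oo) (w i)%:E = 1)%E /\
    forall A, measurable A ->
      mu A = (\sum_(0 <= i <oo) (w i * \1_A (x i))%:E)%E.

Definition is_empirical dT (T : measurableType dT) (R : realType)
  (n : nat) (z : nat -> T) (mu : charge T R) : Prop :=
  forall A, measurable A ->
    mu A = (n%:R^-1 * \sum_(i < n) \1_A (z i))%:E.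

Definition iid_with_law dO (Omega : measurableType dO) dT (T : measurableType dT)
  (R : realType) (Pr : probability Omega R) (Z : nat -> Omega -> T)
  (P : charge T R) : Prop :=
  (forall i, measurable_fun setT (Z i)) /\
  (forall i A, measurable A -> Pr (Z i @^-1` A) = P A) /\
  (forall (n : nat) (B : nat -> set T), (forall i, measurable (B i)) ->
     Pr (\bigcap_(i in `I_n) (Z i @^-1` B i)) =
     (\prod_(i < n) Pr (Z i @^-1` B i))%E).

Definition Pstar dO (Omega : measurableType dO) (R : realType)
  (Pr : probability Omega R) (A : set Omega) : \bar R :=
  ereal_inf [set Pr B | B in [set B | measurable B /\ A `<=` B]].

Definition little_oP dO (Omega : measurableType dO) (R : realType)
  (Pr : probability Omega R) (X : nat -> Omega -> R) (a : nat -> R) : Prop :=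
  forall eps : R, 0 < eps ->
    (fun n => Pstar Pr [set w | eps * a n < `|X n w|]) @ \oo --> 0%E.

Definition big_OP dO (Omega : measurableType dO) (R : realType)
  (Pr : probability Omega R) (X : nat -> Omega -> R) (a : nat -> R) : Prop :=
  forall eps : R, 0 < eps -> exists M : R, 0 < M /\
    exists N : nat, forall n, (N <= n)%N ->
      (Pstar Pr [set w | (M * a n < `|X n w|)%R] <= eps%:E)%E.

Definition modulus (R : realType) (f : R -> R) : Prop :=
  {within [set t : R | 0 <= t], continuous f} /\
  (forall s t, 0 <= s -> s <= t -> f s <= f t) /\
  (forall t, 0 <= t -> 0 <= f t) /\
  (forall t, 0 <= t -> (f t = 0 <-> t = 0)).

Definition seqmin (R : realType) (s : seq R) : R :=
  \big[Order.min/head 0 s]_(x <- s) x.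

Definition lepski_set (R : realType) (V : normedModType R) (G : seq R)
  (est : R -> V) (dbar : R -> R) : seq R :=
  [seq k <- G | all (fun k' => (k <= k') ==> (`|est k - est k'| <= 4 * dbar k')) G].

From HB Require Import structures.
From mathcomp Require Import all_boot all_order all_algebra.
From mathcomp Require Import all_classical all_reals all_analysis.
From mathcomp Require Import lra.
Import Order.TTheory GRing.Theory Num.Theory.
Import numFieldNormedType.Exports.
Local Open Scope classical_set_scope.
Local Open Scope ring_scope.

(* The Lepski bound is deterministic.  Let k be an oracle index of the grid and
   j the largest grid index above k with dbar j <= dbar k + Bbar k.  Every larger
   grid index k' has dbar k' > dbar k + Bbar k, which dominates all the biases
   involved, so the triangle inequality puts j in the Lepski set; since the
   selected index is at most j, its error is at most 6 (dbar k + Bbar k).  This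
   holds on the event d(P_n, P) <= 1 / r_n, where the variance term is at most
   dbar, and that event has probability tending to one. *)

Lemma seqmin_le {R : realType} {s : seq R} {y : R} : y \in s -> seqmin s <= y.
Proof. by move=> ys; exact: ge_bigmin_seq. Qed.

Lemma seqmin_mem {R : realType} (s : seq R) : s != [::] -> seqmin s \in s.
Proof.
case: s => [//|a s] _; rewrite /seqmin big_seq.
apply: (big_ind (fun x => x \in a :: s)) => //=; first by rewrite inE eqxx.
by move=> x y xs ys; rewrite /Order.min; case: ifP.
Qed.

Lemma has_maximal {R : realType} (P : pred R) (s : seq R) :
  has P s ->
  exists2 j, j \in s & P j /\ forall j', j' \in s -> P j' -> j' <= j.
Proof.
move=> /hasP[i0 i0s Pi0]; set m := \big[Order.max/i0]_(j <- s | P j) j.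
have /andP[ms Pm] : (m \in s) && P m.
  rewrite /m big_seq_cond; apply: (big_ind (fun j => (j \in s) && P j)) => //=.
    by rewrite i0s Pi0.
  by move=> x y ? ?; rewrite /Order.max; case: ifP.
by exists m => //; split => // j' j's Pj'; exact: le_bigmax_seq.
Qed.

Lemma eseries_finite_support {R : realType} (f : nat -> R) n :
  (forall i, (n <= i)%N -> f i = 0) ->
  (\sum_(0 <= i <oo) (f i)%:E = (\sum_(i < n) f i)%:E)%E.
Proof.
move=> f0; apply: lim_near_cst => //; exists n => // N /= nN.
rewrite sumEFin (@big_cat_nat _ _ _ n 0 N _ _ (leq0n n) nN) /= big_mkord.
rewrite [X in _ + X]big_nat_cond [X in _ + X]big1 ?addr0 //.
by move=> i /andP[/andP[ni _] _]; exact: f0.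
Qed.

Lemma empirical_is_discrete_prob dT (T : measurableType dT) (R : realType)
    n (z : nat -> T) (mu : charge T R) :
  (0 < n)%N -> is_empirical n z mu -> is_discrete_prob mu.
Proof.
move=> n_gt0 muE; exists z, (fun i => if (i < n)%N then n%:R^-1 else 0).
have w0 i : (n <= i)%N -> (if (i < n)%N then n%:R^-1 else 0) = 0 :> R.
  by move=> ni; rewrite ifF // ltnNge ni.
split; [|split].
- by move=> i; case: ifP; rewrite ?invr_ge0.
- rewrite (@eseries_finite_support _ _ _ w0); congr (_%:E).
  under eq_bigr do rewrite ltn_ord.
  by rewrite sumr_const card_ord -[_ *+ n]mulr_natr mulVf // pnatr_eq0 -lt0n.
- move=> A mA; rewrite muE // (@eseries_finite_support _ _ n).
    by congr (_%:E); rewrite mulr_sumr; apply: eq_bigr => i _; rewrite ltn_ord.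
  by move=> i ni; rewrite w0 ?mul0r.
Qed.

Lemma Pstar_le dO (Omega : measurableType dO) (R : realType)
    (Pr : probability Omega R) (A B : set Omega) :
  A `<=` B -> (Pstar Pr A <= Pstar Pr B)%E.
Proof.
move=> AB; apply: ereal_inf_le_tmp => _ [C [mC BC] <-].
by exists C => //; split => //; exact: subset_trans BC.
Qed.

Section LepskiOracle.
Variables (R : realType) (V : normedModType R).
Variables (G : seq R) (est tr : R -> V) (t : V) (dbar Bbar : R -> R).
Hypothesis G_ge0 : forall {k}, k \in G -> 0 <= k.
Hypothesis Bbar_nonincr : forall {k k'}, 0 <= k -> k <= k' -> Bbar k' <= Bbar k.
Hypothesis est_tr : forall {k}, k \in G -> `|est k - tr k| <= dbar k.
Hypothesis tr_t : forall {k}, k \in G -> `|tr k - t| <= Bbar k.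

Let L := lepski_set G est dbar.

Let dbar_ge0 {k : R} : k \in G -> 0 <= dbar k.
Proof. by move=> kG; apply: le_trans (est_tr kG). Qed.

Let Bbar_ge0 {k : R} : k \in G -> 0 <= Bbar k.
Proof. by move=> kG; apply: le_trans (tr_t kG). Qed.

Lemma dist_est_le {j k : R} : j \in G -> k \in G ->
  `|est j - est k| <= dbar j + Bbar j + Bbar k + dbar k.
Proof.
move=> jG kG; move: (est_tr kG) (tr_t kG); rewrite distrC [`|tr k - t|]distrC.
have := ler_distD (tr j) (est j) (est k); have := ler_distD t (tr j) (est k).
have := ler_distD (tr k) t (est k); have := est_tr jG; have := tr_t jG.
move=> *; lra.
Qed.

Lemma lepski_error_le {j : R} :
  j \in L -> `|est (seqmin L) - t| <= 5 * dbar j + Bbar j.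
Proof.
move=> jL; have /[dup] ktL : seqmin L \in L by apply: seqmin_mem; case: L jL.
rewrite mem_filter => /andP[/allP ktmin _].
have jG : j \in G by move: jL; rewrite mem_filter => /andP[].
have := implyP (ktmin j jG) (seqmin_le jL).
have := ler_distD (est j) (est (seqmin L)) t; have := est_tr jG; have := tr_t jG.
have := ler_distD (tr j) (est j) t; move=> *; lra.
Qed.

Lemma balanced_index_in_lepski_set {k j : R} : k \in G -> j \in G -> k <= j ->
  dbar j <= dbar k + Bbar k ->
  (forall k', k' \in G -> j < k' -> dbar k + Bbar k < dbar k') -> j \in L.
Proof.
move=> kG jG kj dbar_j above_j; rewrite mem_filter jG andbT.
apply/allP => k' k'G; apply/implyP; rewrite le_eqVlt => /predU1P[<-|jk'].
  by rewrite subrr normr0 mulr_ge0 ?dbar_ge0.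
have := dist_est_le jG k'G; have := above_j _ k'G jk'.
have := Bbar_nonincr (G_ge0 kG) kj.
have := Bbar_nonincr (G_ge0 kG) (le_trans kj (ltW jk')).
have := dbar_ge0 kG; move=> *; lra.
Qed.

Lemma lepski_oracle_inequality : G != [::] ->
  `|est (seqmin L) - t| <= 6 * seqmin [seq dbar k + Bbar k | k <- G].
Proof.
move=> G_neq0; set oracle := [seq dbar k + Bbar k | k <- G].
have /mapP[k kG ->] : seqmin oracle \in oracle.
  by rewrite seqmin_mem // -size_eq0 size_map size_eq0.
have [|j jG [/andP[kj dbar_j] jmax]] :=
  @has_maximal _ (fun j => (k <= j) && (dbar j <= dbar k + Bbar k)) G.
  by apply/hasP; exists k => //; rewrite lexx lerDl Bbar_ge0.
have jL : j \in L.
  apply: (balanced_index_in_lepski_set kG) => // k' k'G jk'.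
  rewrite ltNge; apply/negP => dbar_k'.
  have : k' <= j by apply: jmax; rewrite // dbar_k' andbT (le_trans kj (ltW jk')).
  by rewrite leNgt jk'.
apply: le_trans (lepski_error_le jL) _.
have := Bbar_nonincr (G_ge0 kG) kj; have := dbar_ge0 kG; move=> *; lra.
Qed.

End LepskiOracle.
Theorem theorem2
  (R : realType) (d : nat)
  (* sample space Z subset of R^d, with trace Borel sigma-algebra *)
  (dT : measure_display) (T : measurableType dT) (iota : T -> 'rV[R]_d)
  (hT : borel_subset_of_Rd iota)
  (* probability space carrying the data *)
  (dO : measure_display) (Omega : measurableType dO) (Pr : probability Omega R)
  (* model M, parameter space Theta, index set K *)
  (M : set (charge T R)) (hM : forall Q, M Q -> is_prob_charge Q)
  (Theta : normedModType R)
  (K : set R) (hK0 : forall k, K k -> 0 <= k)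
  (hKub : forall m : R, exists k, K k /\ m < k)
  (* regularization psi_k of psi, defined on D_psi *)
  (Dpsi : set (charge T R))
  (hDM : M `<=` Dpsi) (hDD : [set Q | is_discrete_prob Q] `<=` Dpsi)
  (psi : charge T R -> Theta) (psik : R -> charge T R -> Theta)
  (hreg : forall Q, M Q -> forall eps : R, 0 < eps -> exists k0 : R,
            forall k, K k -> k0 <= k -> `|psik k Q - psi Q| <= eps)
  (* data *)
  (P : charge T R) (hP : M P)
  (Z : nat -> Omega -> T) (hZ : iid_with_law Pr Z P)
  (Pn : nat -> Omega -> charge T R)
  (hPn : forall n w, is_empirical n (fun i => Z i w) (Pn n w))
  (* distance d on D_psi *)
  (dist : charge T R -> charge T R -> R)
  (hd0 : forall x y, Dpsi x -> Dpsi y -> 0 <= dist x y)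
  (hdeq : forall x y, Dpsi x -> Dpsi y -> (dist x y = 0 <-> same_measure x y))
  (hdsym : forall x y, Dpsi x -> Dpsi y -> dist x y = dist y x)
  (hdtri : forall x y z, Dpsi x -> Dpsi y -> Dpsi z ->
             dist x z <= dist x y + dist y z)
  (* continuity at P with moduli delta_k *)
  (delta : R -> R -> R)
  (hmod : forall k, K k -> modulus (delta k))
  (hcont : forall k, K k -> forall P', Dpsi P' ->
             `|psik k P' - psik k P| <= delta k (dist P' P))
  (* rate r_n *)
  (r : nat -> R) (hrpos : forall n, 0 < r n) (hrdiv : r n @[n --> \oo] --> +oo)
  (hrate : little_oP Pr (fun n w => dist (Pn n w) P) (fun n => (r n)^-1))
  (* bias bound Bbar *)
  (Bbar : R -> R)
  (hB0 : forall k, 0 <= k -> 0 <= Bbar k)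
  (hBmono : forall k k', 0 <= k -> k <= k' -> Bbar k' <= Bbar k)
  (hBbound : forall k, K k -> `|psik k P - psi P| <= Bbar k)
  (hBlim : Bbar k @[k --> +oo] --> 0)
  (* variance bound dbar n k = \bar delta_k(r_n^-1) *)
  (dbar : nat -> R -> R)
  (hdb0 : forall n k, 0 <= k -> 0 <= dbar n k)
  (hdbmono : forall n k k', 0 <= k -> k <= k' -> dbar n k <= dbar n k')
  (hdbbound : forall n k, K k -> delta k (r n)^-1 <= dbar n k)
  (* grids G_n *)
  (G : nat -> seq R) (hGK : forall n k, k \in G n -> K k)
  (hGne : forall n, G n != [::]) :
  let ktilde := fun n w =>
    seqmin (lepski_set (G n) (fun k => psik k (Pn n w)) (dbar n)) in
  big_OP Pr (fun n w => `|psik (ktilde n w) (Pn n w) - psi P|)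
           (fun n => seqmin [seq dbar n k + Bbar k | k <- G n]).
Proof.
move=> ktilde eps eps_gt0; exists 6; split => //.
have [N _ PstarN] :=
  @hrate 1 ltr01 _ (nbhs_open_ereal_lt (f := fun _ => eps) eps_gt0).
(* P_0 is the zero measure (0^-1 = 0), which need not lie in Dpsi. *)
exists N.+1 => n Nn; have n_gt0 : (0 < n)%N := leq_trans (ltn0Sn N) Nn.
have PnD w : Dpsi (Pn n w).
  by apply: hDD; exact: empirical_is_discrete_prob n_gt0 (hPn n w).
apply: le_trans (ltW (PstarN n (ltnW Nn))).
apply: Pstar_le => w /=; rewrite mul1r normr_id !ltNge; apply: contra => dist_le.
have dist_ge0 : 0 <= dist (Pn n w) P by apply: hd0; [exact: PnD | exact: hDM].
apply: (@lepski_oracle_inequality _ _ _ (psik^~ (Pn n w)) (psik^~ P))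
  => [k kG||k kG|k kG|]; last exact: hGne.
- exact/hK0/hGK/kG.
- exact: hBmono.
- have K_k := hGK _ _ kG; apply: le_trans (hcont k K_k _ (PnD w)) _.
  apply: le_trans (hdbbound n k K_k); have [_ [delta_mono _]] := hmod k K_k.
  by apply: delta_mono => //; apply: le_trans dist_le; exact: ler_norm.
- exact/hBbound/hGK/kG.
Qed.
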